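(* Let $q$ be a prime power with $q\equiv2\pmod 3$, let $m,n$ be positive integers, let $\omega\in\mathbb{F}_{q^2}$ be an element of multiplicative order $3$, and let $\varepsilon\in\mathbb{F}_q^*\cup\{\pm\omega,\pm\omega^2\}$. Put $f(x)=(x+x^q)^m+\varepsilon(x+\omega x^q)^n$. Then: (i) if $\varepsilon\in\mathbb{F}_q^*$, $f$ permutes $\mathbb{F}_{q^2}$ if and only if $\gcd(mn,q-1)=1$ and $3\nmid n$; (ii) if $\varepsilon=\pm\omega$, $f$ permutes $\mathbb{F}_{q^2}$ if and only if $\gcd(mn,q-1)=1$ and $n\not\equiv1\pmod3$; (iii) if $\varepsilon=\pm\omega^2$, $f$ permutes $\mathbb{F}_{q^2}$ if and only if $\gcd(mn,q-1)=1$ and $n\not\equiv2\pmod3$.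
   Context: $f$ permutes $\mathbb{F}_{q^2}$ means the map $x\mapsto f(x)$ on $\mathbb{F}_{q^2}$ is bijective. *)

From mathcomp Require Import all_boot all_algebra all_field.
Set Implicit Arguments. Unset Strict Implicit. Unset Printing Implicit Defensive.
Import GRing.Theory.
Local Open Scope ring_scope.

Definition permutes (F : finFieldType) (f : F -> F) : Prop := bijective f.

Definition in_Fq (F : finFieldType) (q : nat) (x : F) : bool := x ^+ q == x.

Definition fpoly (F : finFieldType) (q m n : nat) (w eps : F) (x : F) : F :=
  (x + x ^+ q) ^+ m + eps * (x + w * x ^+ q) ^+ n.

From mathcomp Require Import all_boot all_algebra all_field all_solvable.
From mathcomp Require Import zify ring.
Set Implicit Arguments. Unset Strict Implicit. Unset Printing Implicit Defensive.
Import GRing.Theory.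
Local Open Scope ring_scope.

(* Write f x = tr x ^+ m + eps * twist x ^+ n with tr x = x + x^q and
   twist x = x + w x^q.  The map x |-> (tr x, twist x) is injective, tr x lies in
   F_q and (twist x)^q = w^2 twist x.  In each of the three cases eps^q = w^e eps
   (e = 0, 1, 2), so the second summand is a w^(2n+e)-eigenvector of the Frobenius.
   If 3 does not divide 2n + e, f x1 = f x2 splits into tr x1^m = tr x2^m and
   twist x1^n = twist x2^n, because an element of F_q that is an eigenvector for
   an eigenvalue other than 1 vanishes; the ratios tr x1 / tr x2 and
   twist x1 / twist x2 lie in F_q, so coprimality of m and n with q - 1 recovers
   tr and twist themselves.  Conversely, if 3 divides 2n + e then f takes its
   values in F_q, and if m (resp. n) shares a factor with q - 1, a root of unity
   r <> 1 in F_q gives f (r x0) = f x0 for a nonzero root x0 of twist (resp. tr). *)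

Lemma expr1_coprime (R : nzRingType) (r : R) (j k : nat) :
  (0 < j)%N -> coprime j k -> r ^+ j = 1 -> r ^+ k = 1 -> r = 1.
Proof.
move=> j_gt0 /eqP cop_jk rj rk; case: (egcdnP k j_gt0) => a b bezout _.
rewrite cop_jk in bezout.
have : r ^+ (a * j) = r ^+ (b * k + 1) by rewrite bezout.
by rewrite mulnC exprM rj expr1n exprD mulnC exprM rk expr1n mul1r expr1.
Qed.

Lemma finField_prim_root (F : finFieldType) :
  exists z : F, #|F|.-1.-primitive_root z.
Proof.
have card_gt1 := finNzRing_gt1 F.
have : has #|F|.-1.-primitive_root (enum (predC1 (0 : F))).
  apply: has_prim_root; first by rewrite -subn1 subn_gt0.
  - apply/allP => x; rewrite mem_enum /= => x_neq0; rewrite unity_rootE.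
    apply/eqP/(mulIf x_neq0).
    by rewrite mul1r -exprSr prednK ?expf_card // ltnW.
  - exact: (enum_uniq (predC1 (0 : F))).
  - by rewrite -cardE cardC1.
by case/hasP => z _ prim_z; exists z.
Qed.

Lemma pchar_pnat_expn (F : finFieldType) (p k l : nat) :
  prime p -> #|F| = (p ^ l)%N -> [pchar F].-nat (p ^ k)%N.
Proof.
by move=> p_pr cardF; rewrite pnatX (pnatE _ p_pr) (card_finPcharP cardF p_pr).
Qed.

Section FrobeniusInvolution.

Variables (F : finFieldType) (q : nat).
Hypothesis cardF : #|F| = (q ^ 2)%N.

Lemma frob_gt1 : (1 < q)%N.
Proof. by have := finNzRing_gt1 F; rewrite cardF; case: q => [|[]]. Qed.

Lemma frobK (x : F) : (x ^+ q) ^+ q = x.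
Proof. by rewrite -exprM mulnn -cardF expf_card. Qed.

Lemma frob_fixed_unity (x : F) : x != 0 -> x ^+ q = x -> x ^+ q.-1 = 1.
Proof.
move=> x_neq0 xq; apply: (mulIf x_neq0).
by rewrite mul1r -exprSr prednK ?xq // ltnW ?frob_gt1.
Qed.

Lemma expr_inj_frob_fixed (j : nat) (a b : F) :
  (0 < j)%N -> coprime j q.-1 ->
  (a / b) ^+ q = a / b -> a ^+ j = b ^+ j -> a = b.
Proof.
move=> j_gt0 cop_j abq abj; have [b0 | b_neq0] := eqVneq b 0.
  by move/eqP: abj; rewrite b0 expr0n eqn0Ngt j_gt0 expf_eq0 j_gt0 => /eqP.
suff ab1 : a / b = 1 by rewrite -[a](divfK b_neq0) ab1 mul1r.
have abj1 : (a / b) ^+ j = 1 by rewrite exprMn exprVn abj divff ?expf_neq0.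
have ab_neq0 : a / b != 0 by move: (oner_neq0 F); rewrite -abj1 expf_eq0 j_gt0.
exact: expr1_coprime j_gt0 cop_j abj1 (frob_fixed_unity ab_neq0 abq).
Qed.

Lemma exists_frob_fixed_root (j : nat) : ~~ coprime j q.-1 ->
  exists r : F, [/\ r ^+ q = r, r ^+ j = 1 & r != 1].
Proof.
move=> ncop; have q_gt1 := frob_gt1; pose d := gcdn j q.-1.
have d_dvd : (d %| #|F|.-1)%N.
  by rewrite cardF (@dvdn_trans q.-1) ?dvdn_gcdr //; apply/dvdnP; exists q.+1; nia.
have [z prim_z] := finField_prim_root F.
have prim_r := dvdn_prim_root prim_z d_dvd; set r := z ^+ _ in prim_r.
exists r; split.
- have rq1 : r ^+ q.-1 = 1 by apply/eqP; rewrite -(prim_order_dvd prim_r) dvdn_gcdr.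
  by rewrite -(prednK (ltnW q_gt1)) exprS rq1 mulr1.
- by apply/eqP; rewrite -(prim_order_dvd prim_r) dvdn_gcdl.
- rewrite -[r]expr1 -(prim_order_dvd prim_r) dvdn1.
  have : (0 < d)%N by rewrite gcdn_gt0 orbC -subn1 subn_gt0 q_gt1.
  by rewrite /coprime -/d in ncop; lia.
Qed.

End FrobeniusInvolution.

Section Proposition.

Variables (F : finFieldType) (q : nat) (w : F).
Hypotheses (cardF : #|F| = (q ^ 2)%N) (q_pchar : [pchar F].-nat q).
Hypotheses (q_mod3 : (q %% 3 = 2)%N) (prim_w : 3.-primitive_root w).

Let frobD (x y : F) : (x + y) ^+ q = x ^+ q + y ^+ q := exprDn_pchar x y q_pchar.
Let frobN (x : F) : (- x) ^+ q = - x ^+ q := exprNn_pchar x q_pchar.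
Let frobB (x y : F) : (x - y) ^+ q = x ^+ q - y ^+ q.
Proof. by rewrite frobD frobN. Qed.
Let frobK := frobK cardF.

Lemma expr_w_eq1 k : (w ^+ k == 1) = (3 %| k)%N.
Proof. by rewrite (prim_order_dvd prim_w). Qed.

Lemma frob_w : w ^+ q = w ^+ 2.
Proof.
by rewrite {1}(divn_eq q 3) q_mod3 exprD mulnC exprM (prim_expr_order prim_w) expr1n mul1r.
Qed.

Lemma frob_wexpr k : (w ^+ k) ^+ q = w ^+ k * w ^+ k.
Proof. by rewrite exprAC frob_w -exprM -exprD addnn mul2n. Qed.

Lemma w_neq0 : w != 0.
Proof. by rewrite (prim_root_eq0 prim_w). Qed.

Lemma w_neq1 : w != 1.
Proof. by rewrite -[w]expr1 expr_w_eq1. Qed.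

Lemma w_neq_w2 : w != w ^+ 2.
Proof. by rewrite eq_sym -[w in _ == w]expr1 (eq_prim_root_expr prim_w). Qed.

Let tr (x : F) := x + x ^+ q.
Let twist (x : F) := x + w * x ^+ q.

Lemma frob_tr x : tr x ^+ q = tr x.
Proof. by rewrite /tr frobD frobK addrC. Qed.

Lemma frob_twist x : twist x ^+ q = w ^+ 2 * twist x.
Proof.
rewrite /twist frobD exprMn frob_w frobK mulrDr mulrA -exprSr.
by rewrite (prim_expr_order prim_w) mul1r addrC.
Qed.

Lemma tr_scale r x : r ^+ q = r -> tr (r * x) = r * tr x.
Proof. by move=> rq; rewrite /tr exprMn rq mulrDr. Qed.

Lemma twist_scale r x : r ^+ q = r -> twist (r * x) = r * twist x.
Proof. by move=> rq; rewrite /twist exprMn rq; ring. Qed.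

Lemma tr_twist_inj x1 x2 : tr x1 = tr x2 -> twist x1 = twist x2 -> x1 = x2.
Proof.
have lin x : (w - 1) * x ^+ q = twist x - tr x by rewrite /twist /tr; ring.
have w1_neq0 : w - 1 != 0 by rewrite subr_eq0 w_neq1.
move=> tr12 tw12; rewrite -[x1]frobK -[x2]frobK; congr (_ ^+ q).
by apply: (mulfI w1_neq0); rewrite !lin tr12 tw12.
Qed.

Lemma twist_root : twist (w - 1) = 0.
Proof.
rewrite /twist frobB expr1n frob_w.
by ring: (prim_expr_order prim_w).
Qed.

Lemma tr_root : tr (w - w ^+ 2) = 0.
Proof.
rewrite /tr frobB frob_w frob_wexpr.
by ring: (prim_expr_order prim_w).
Qed.

Lemma frob_signed_wexpr k (eps : F) :
  eps = w ^+ k \/ eps = - w ^+ k -> eps ^+ q = w ^+ k * eps.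
Proof. by case=> ->; rewrite ?frobN ?mulrN frob_wexpr. Qed.

Lemma frob_ratio (c a b : F) : c != 0 ->
  a ^+ q = c * a -> b ^+ q = c * b -> (a / b) ^+ q = a / b.
Proof. by move=> c_neq0 aq bq; rewrite exprMn exprVn aq bq invfM mulrACA divff ?mul1r. Qed.

Lemma frob_eigen_eq0 (c a : F) : c != 1 -> a ^+ q = a -> a ^+ q = c * a -> a = 0.
Proof.
move=> c_neq1 aq; rewrite aq -{1}[a]mul1r => /(congr1 (fun t => t - c * a)).
by rewrite subrr -mulrBl => /eqP; rewrite mulf_eq0 subr_eq0 eq_sym (negPf c_neq1) => /eqP.
Qed.

Section FixedCoefficient.

Variables (m n e : nat) (eps : F).
Hypotheses (m_gt0 : (0 < m)%N) (n_gt0 : (0 < n)%N).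
Hypotheses (eps_neq0 : eps != 0) (frob_eps : eps ^+ q = w ^+ e * eps).

Let f := fpoly q m n w eps.

Lemma fpolyE x : f x = tr x ^+ m + eps * twist x ^+ n.
Proof. by []. Qed.

Lemma frob_eps_twist x :
  (eps * twist x ^+ n) ^+ q = w ^+ (2 * n + e) * (eps * twist x ^+ n).
Proof. by rewrite exprMn frob_eps exprAC frob_twist exprMn -exprM exprD; ring. Qed.

Lemma fpoly_scale r x : r ^+ q = r ->
  f (r * x) = r ^+ m * tr x ^+ m + eps * (r ^+ n * twist x ^+ n).
Proof. by move=> rq; rewrite fpolyE tr_scale ?twist_scale // !exprMn. Qed.

Lemma coprime_of_fpoly_inj : injective f -> coprime m q.-1 && coprime n q.-1.
Proof.
move=> f_inj; have scale_fixed r x : x != 0 -> f (r * x) = f x -> r = 1.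
  by move=> x_neq0 /f_inj; rewrite -{2}[x]mul1r => /(mulIf x_neq0).
apply/andP; split; apply/negPn/negP => /(exists_frob_fixed_root cardF).
all: case=> r [rq rj /eqP r_neq1]; apply: r_neq1.
- apply: (scale_fixed _ (w - 1)); first by rewrite subr_eq0 w_neq1.
  by rewrite fpoly_scale // fpolyE twist_root rj !expr0n gtn_eqF // !mul1r mulr0.
- apply: (scale_fixed _ (w - w ^+ 2)); first by rewrite subr_eq0 w_neq_w2.
  by rewrite fpoly_scale // fpolyE tr_root rj !expr0n gtn_eqF // !mul1r mulr0.
Qed.

Lemma fpoly_frob_fixed_of_dvd3 x : (3 %| 2 * n + e)%N -> f x ^+ q = f x.
Proof.
move=> dvd3; rewrite fpolyE frobD exprAC frob_tr frob_eps_twist.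
by move: dvd3; rewrite -expr_w_eq1 => /eqP ->; rewrite mul1r.
Qed.

Lemma not_dvd3_of_fpoly_bij : permutes f -> ~~ (3 %| 2 * n + e)%N.
Proof.
case=> g _ fg; apply/negP => /(fpoly_frob_fixed_of_dvd3 (g w)).
by rewrite fg frob_w => /esym/eqP; rewrite (negPf w_neq_w2).
Qed.

Lemma fpoly_inj : ~~ (3 %| 2 * n + e)%N -> coprime m q.-1 -> coprime n q.-1 ->
  injective f.
Proof.
move=> ndvd3 cop_m cop_n x1 x2 f12.
have c_neq1 : w ^+ (2 * n + e) != 1 by rewrite expr_w_eq1.
have diff_eq : tr x1 ^+ m - tr x2 ^+ m = eps * twist x2 ^+ n - eps * twist x1 ^+ n.
  have : f x1 - f x2 = 0 by rewrite f12 subrr.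
  by rewrite !fpolyE => f12'; apply/eqP; rewrite -subr_eq0 -f12'; apply/eqP; ring.
have tr_pow : tr x1 ^+ m = tr x2 ^+ m.
  apply/eqP; rewrite -subr_eq0; apply/eqP/(frob_eigen_eq0 c_neq1).
  - by rewrite frobB exprAC frob_tr exprAC frob_tr.
  - by rewrite diff_eq frobB !frob_eps_twist mulrBr.
have twist_pow : twist x1 ^+ n = twist x2 ^+ n.
  by apply: (mulfI eps_neq0); apply/eqP; rewrite eq_sym -subr_eq0 -diff_eq tr_pow subrr.
apply: tr_twist_inj.
- apply: (expr_inj_frob_fixed cardF m_gt0 cop_m _ tr_pow).
  by apply: (frob_ratio (oner_neq0 F)); rewrite mul1r frob_tr.
- apply: (expr_inj_frob_fixed cardF n_gt0 cop_n _ twist_pow).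
  exact: frob_ratio (expf_neq0 _ w_neq0) (frob_twist _) (frob_twist _).
Qed.

Lemma permutes_fpoly_iff :
  permutes f <-> coprime (m * n) q.-1 /\ ~~ (3 %| 2 * n + e)%N.
Proof.
rewrite coprimeMl; split.
- move=> f_bij; split; last exact: not_dvd3_of_fpoly_bij.
  exact: coprime_of_fpoly_inj (bij_inj f_bij).
- by case=> /andP[cop_m cop_n] ndvd3; apply/injF_bij/fpoly_inj.
Qed.

End FixedCoefficient.

End Proposition.

Theorem proposition3p4 (F : finFieldType) (q : nat)
  (hq : exists p k : nat, [/\ prime p, (0 < k)%N & q = (p ^ k)%N])
  (hF : #|F| = (q ^ 2)%N) (hq3 : (q %% 3 = 2)%N)
  (m n : nat) (hm : (0 < m)%N) (hn : (0 < n)%N)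
  (w : F) (hw : 3.-primitive_root w) (eps : F) :
  ((eps != 0) && in_Fq q eps ->
     (permutes (fpoly q m n w eps) <->
        coprime (m * n) q.-1 /\ ~~ (3 %| n)%N)) /\
  ((eps = w \/ eps = - w) ->
     (permutes (fpoly q m n w eps) <->
        coprime (m * n) q.-1 /\ (n %% 3 != 1)%N)) /\
  ((eps = w ^+ 2 \/ eps = - w ^+ 2) ->
     (permutes (fpoly q m n w eps) <->
        coprime (m * n) q.-1 /\ (n %% 3 != 2)%N)).
Proof.
have q_pchar : [pchar F].-nat q.
  case: hq => p [k [p_pr _ qE]]; rewrite qE.
  by apply: (pchar_pnat_expn k p_pr); rewrite hF qE -expnM.
have fpoly_iff k : eps != 0 -> eps ^+ q = w ^+ k * eps ->
    permutes (fpoly q m n w eps) <-> coprime (m * n) q.-1 /\ ~~ (3 %| 2 * n + k)%N.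
  exact: permutes_fpoly_iff.
have frob_signed k : eps = w ^+ k \/ eps = - w ^+ k -> eps ^+ q = w ^+ k * eps.
  exact: frob_signed_wexpr.
have signed_neq0 k : eps = w ^+ k \/ eps = - w ^+ k -> eps != 0.
  by case=> ->; rewrite ?oppr_eq0 expf_neq0 ?(w_neq0 hw).
split; [|split].
- case/andP => eps_neq0 /eqP eps_Fq; rewrite (fpoly_iff 0%N eps_neq0) ?mul1r //.
  by have -> : (3 %| 2 * n + 0)%N = (3 %| n)%N by apply/idP/idP; lia.
- move=> eps_w; rewrite (fpoly_iff 1%N (signed_neq0 1%N eps_w) (frob_signed 1%N eps_w)).
  by have -> : (3 %| 2 * n + 1)%N = (n %% 3 == 1)%N by apply/idP/idP; lia.
- move=> eps_w2; rewrite (fpoly_iff 2%N (signed_neq0 2%N eps_w2) (frob_signed 2%N eps_w2)).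
  by have -> : (3 %| 2 * n + 2)%N = (n %% 3 == 2)%N by apply/idP/idP; lia.
Qed.
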